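(* Let $n\ge1$ be an integer, $p\in(0,1)$, $q:=1-p$, and let $j_*:=\lfloor(n+1)p\rfloor+1$. Then for every integer $j\ge j_*$, $$j-\tfrac32<j-1<y_j\le j-\tfrac12<x_j\le y_{j+1}\le j+\tfrac12;$$ moreover, if $j\le n$, then $y_j<j-\frac12$ and $x_j<y_{j+1}$.
   Context: For $j\in\mathbb{Z}$, $q_j:=\mathbf{P}(B_n\ge j)$ and $p_j:=q_j-q_{j+1}=\mathbf{P}(B_n=j)=\binom nj p^jq^{n-j}$, where $B_n$ is binomial with parameters $n,p$. For each integer $j$ with $j_*\le j\le n$ (equivalently $1\le j\le n$ and $j>(n+1)p$, which gives $p_{j-1}>p_j$), define $$x_j:=j-\tfrac12+\frac{q_j}{p_j}+\frac{\frac{q_j}{p_{j-1}}-\frac{q_j}{p_j}}{\ln\frac{p_{j-1}}{p_j}},\qquad y_j:=j-\tfrac12+\frac{q_j}{p_{j-1}}+\frac{\frac{q_j}{p_{j-1}}-\frac{q_j}{p_j}}{\ln\frac{p_{j-1}}{p_j}},$$ and for integers $j\ge n+1$ define $x_j:=j+\frac12$, $y_j:=j-\frac12$. *)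

From Stdlib Require Import Reals Lra Lia ZArith.
Open Scope R_scope.

Definition pmf (n : nat) (p : R) (j : Z) : R :=
  if ((0 <=? j)%Z && (j <=? Z.of_nat n)%Z)%bool then
    C n (Z.to_nat j) * p ^ (Z.to_nat j) * (1 - p) ^ (n - Z.to_nat j)
  else 0.

Definition tail (n : nat) (p : R) (j : Z) : R :=
  sum_f_R0 (fun k => if (j <=? Z.of_nat k)%Z then pmf n p (Z.of_nat k) else 0) n.

Definition jstar (n : nat) (p : R) : Z := (Int_part ((INR n + 1) * p) + 1)%Z.

Definition corr (n : nat) (p : R) (j : Z) : R :=
  (tail n p j / pmf n p (j - 1) - tail n p j / pmf n p j)
  / ln (pmf n p (j - 1) / pmf n p j).

(* x_j, y_j: formulas for j <= n (used only for j_* <= j <= n),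
   and j + 1/2, j - 1/2 for j >= n+1 *)
Definition xj (n : nat) (p : R) (j : Z) : R :=
  if (j <=? Z.of_nat n)%Z then
    IZR j - 1/2 + tail n p j / pmf n p j + corr n p j
  else IZR j + 1/2.

Definition yj (n : nat) (p : R) (j : Z) : R :=
  if (j <=? Z.of_nat n)%Z then
    IZR j - 1/2 + tail n p j / pmf n p (j - 1) + corr n p j
  else IZR j - 1/2.

From Stdlib Require Import Reals ZArith Lra Lia.
From Coquelicot Require Import Coquelicot.
Open Scope R_scope.

(* Put r := p_{j-1}/p_j and s := q_j/p_j.  Then y_j - (j - 1/2) = (s/r)(1 - L r)
   and x_j - (j - 1/2) = s (1 - L r / r), where L r = (r - 1)/ln r is the
   logarithmic mean of 1 and r, which satisfies 1 < L r < min(r, (r + 1)/2).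
   Past the mode the binomial pmf is decreasing and log-concave, so q_j is
   dominated by a geometric series of ratio 1/r: s (r - 1) < r.  This places
   y_j in (j - 1, j - 1/2) and x_j above j - 1/2.  For x_j < y_{j+1} one uses
   q_j = p_j + q_{j+1}, the growth r_j <= r_{j+1} of the ratios (log-concavity)
   and the decrease of L r / r. *)

Lemma ln_pos x : 1 < x -> 0 < ln x.
Proof. intros Hx. rewrite <- ln_1. apply ln_increasing; lra. Qed.

Lemma ln_lt_sub1 x : 0 < x -> x <> 1 -> ln x < x - 1.
Proof.
  intros Hx Hx1.
  assert (Hexp : x < exp (x - 1)) by (pose proof (exp_ineq1 (x - 1)); lra).
  rewrite <- (ln_exp (x - 1)). apply ln_increasing; lra.
Qed.

Lemma ln_gt_1_sub_inv r : 1 < r -> 1 - / r < ln r.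
Proof.
  intros Hr.
  assert (Hinv : 0 < / r < 1).
  { split; [apply Rinv_0_lt_compat; lra|].
    rewrite <- Rinv_1. apply Rinv_lt_contravar; lra. }
  pose proof (ln_lt_sub1 (/ r) ltac:(lra) ltac:(lra)) as H.
  rewrite ln_Rinv in H; lra.
Qed.

Lemma ln_gt_mid r : 1 < r -> 2 * (r - 1) / (r + 1) < ln r.
Proof.
  intros Hr.
  set (f x := ln x - 2 * (x - 1) / (x + 1)).
  destruct (MVT_cor2 f (fun x => (x - 1) ^ 2 / (x * (x + 1) ^ 2)) 1 r Hr)
    as [c [Hmvt Hc]].
  { intros c Hc. apply is_derive_Reals. unfold f.
    auto_derive; [lra|field; lra]. }
  assert (Hslope : 0 < (c - 1) ^ 2 / (c * (c + 1) ^ 2)).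
  { apply Rdiv_lt_0_compat; [nra|]. apply Rmult_lt_0_compat; nra. }
  unfold f in Hmvt. rewrite ln_1 in Hmvt.
  replace (2 * (1 - 1) / (1 + 1)) with 0 in Hmvt by field.
  nra.
Qed.

Definition logmean (r : R) : R := (r - 1) / ln r.

Section LogMean.

Variable r : R.
Hypothesis r_gt1 : 1 < r.

Lemma logmean_gt1 : 1 < logmean r.
Proof.
  pose proof (ln_lt_sub1 r ltac:(lra) ltac:(lra)). pose proof (ln_pos r r_gt1).
  unfold logmean. apply (Rmult_lt_reg_r (ln r)); [lra|]. field_simplify; lra.
Qed.

Lemma logmean_lt : logmean r < r.
Proof.
  pose proof (ln_gt_1_sub_inv r r_gt1). pose proof (ln_pos r r_gt1).
  assert (r - 1 < r * ln r).
  { replace (r - 1) with (r * (1 - / r)) by (field; lra).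
    apply Rmult_lt_compat_l; lra. }
  unfold logmean. apply (Rmult_lt_reg_r (ln r)); [lra|]. field_simplify; lra.
Qed.

Lemma logmean_lt_mid : logmean r < (r + 1) / 2.
Proof.
  pose proof (ln_gt_mid r r_gt1). pose proof (ln_pos r r_gt1).
  assert (2 * (r - 1) < (r + 1) * ln r).
  { replace (2 * (r - 1)) with ((r + 1) * (2 * (r - 1) / (r + 1))) by (field; lra).
    apply Rmult_lt_compat_l; lra. }
  unfold logmean. apply (Rmult_lt_reg_r (ln r)); [lra|]. field_simplify; lra.
Qed.

Lemma logmean_div_decreasing r' : r < r' -> logmean r' / r' < logmean r / r.
Proof.
  intros Hrr'.
  set (f x := logmean x / x).
  destruct (MVT_cor2 f (fun x => (ln x - x + 1) / (x * ln x) ^ 2) r r' Hrr')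
    as [c [Hmvt Hc]].
  { intros c Hc. pose proof (ln_pos c ltac:(lra)).
    apply is_derive_Reals. unfold f, logmean.
    auto_derive; [repeat split; lra|field; lra]. }
  assert (Hslope : (ln c - c + 1) / (c * ln c) ^ 2 < 0).
  { pose proof (ln_lt_sub1 c ltac:(lra) ltac:(lra)). pose proof (ln_pos c ltac:(lra)).
    apply Rmult_neg_pos; [lra|]. apply Rinv_0_lt_compat, pow_lt. nra. }
  unfold f in Hmvt. nra.
Qed.

End LogMean.

Lemma logmean_div_pos r : 1 < r -> 0 < logmean r / r.
Proof. intros Hr. pose proof (logmean_gt1 r Hr). apply Rdiv_lt_0_compat; lra. Qed.

(* [lower_offset Q a b] and [upper_offset Q a b] are y_j - (j - 1/2) and
   x_j - (j - 1/2) for Q = q_j, a = p_{j-1}, b = p_j. *)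
Definition lower_offset (Q a b : R) : R := Q / a + (Q / a - Q / b) / ln (a / b).
Definition upper_offset (Q a b : R) : R := Q / b + (Q / a - Q / b) / ln (a / b).

Section Offsets.

Variables a b : R.
Hypothesis b_pos : 0 < b.
Hypothesis b_lt_a : b < a.

Lemma ratio_gt1 : 1 < a / b.
Proof. apply (Rmult_lt_reg_r b); [lra|]. field_simplify; lra. Qed.

Lemma lower_offset_logmean Q : lower_offset Q a b = Q / a * (1 - logmean (a / b)).
Proof.
  pose proof (ln_pos _ ratio_gt1).
  unfold lower_offset, logmean. field. repeat split; lra.
Qed.

Lemma upper_offset_logmean Q :
  upper_offset Q a b = Q / b * (1 - logmean (a / b) / (a / b)).
Proof.
  pose proof (ln_pos _ ratio_gt1).
  unfold upper_offset, logmean. field. repeat split; lra.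
Qed.

Lemma lower_offset_bounds Q :
  0 < Q -> (a - b) * Q < a * b -> -1/2 < lower_offset Q a b < 0.
Proof.
  intros HQ Htail. rewrite lower_offset_logmean.
  pose proof (logmean_gt1 _ ratio_gt1). pose proof (logmean_lt_mid _ ratio_gt1).
  assert (HQa : 0 < Q / a) by (apply Rdiv_lt_0_compat; lra).
  assert (Q / a * (a / b - 1) < 1).
  { replace (Q / a * (a / b - 1)) with ((a - b) * Q / (a * b)) by (field; lra).
    apply (Rmult_lt_reg_r (a * b)); [nra|]. field_simplify; nra. }
  split; nra.
Qed.

Lemma upper_offset_pos Q : 0 < Q -> 0 < upper_offset Q a b.
Proof.
  intros HQ. rewrite upper_offset_logmean.
  pose proof (logmean_lt _ ratio_gt1).
  assert (logmean (a / b) / (a / b) < 1).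
  { apply (Rmult_lt_reg_r (a / b)); [pose proof ratio_gt1; lra|].
    field_simplify; lra. }
  apply Rmult_lt_0_compat; [apply Rdiv_lt_0_compat|]; lra.
Qed.

Lemma upper_offset_lt Q : 0 < Q -> upper_offset Q a b < Q / b.
Proof.
  intros HQ. rewrite upper_offset_logmean.
  pose proof (logmean_div_pos _ ratio_gt1).
  assert (0 < Q / b) by (apply Rdiv_lt_0_compat; lra).
  nra.
Qed.

End Offsets.

(* [a * c <= b * b] means b/c >= a/b, so the decrease of [logmean r / r]
   lets the correction term of x_j dominate that of y_{j+1}. *)
Lemma upper_offset_lt_succ a b c Q :
  0 < c -> 0 < b < a -> a * c <= b * b -> 0 <= Q -> (b - c) * Q < b * c ->
  upper_offset (b + Q) a b < 1 + lower_offset Q b c.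
Proof.
  intros Hc [Hb Hab] Hconc HQ Htail.
  assert (Hcb : c < b) by nra.
  pose proof (ratio_gt1 a b Hb Hab) as Hr.
  assert (Hrr : a / b <= b / c).
  { apply (Rmult_le_reg_r (b * c)); [nra|]. field_simplify; nra. }
  rewrite (upper_offset_logmean a b), (lower_offset_logmean b c) by lra.
  set (r := a / b) in *. set (r' := b / c) in *.
  assert (Hphi : logmean r' / r' <= logmean r / r).
  { destruct Hrr as [Hlt|<-]; [|lra].
    left. apply logmean_div_decreasing; assumption. }
  pose proof (logmean_div_pos r' ltac:(lra)).
  replace (logmean r') with (r' * (logmean r' / r')) by (field; lra).
  replace ((b + Q) / b) with (1 + Q / b) by (field; lra).
  assert (Ht : 0 <= Q / b) by (apply Rmult_le_pos; [|left; apply Rinv_0_lt_compat]; lra).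
  assert (Htr : Q / b * r' < 1 + Q / b).
  { unfold r'. apply (Rmult_lt_reg_r (b * c)); [nra|]. field_simplify; nra. }
  assert (0 <= Q / b * r') by (apply Rmult_le_pos; lra).
  nra.
Qed.

Lemma sum_from_succ (F : nat -> R) (N i : nat) : (i <= N)%nat ->
  sum_f_R0 (fun k => if (i <=? k)%nat then F k else 0) N =
  F i + sum_f_R0 (fun k => if (S i <=? k)%nat then F k else 0) N.
Proof.
  induction N as [|N IH]; intros HiN; cbn [sum_f_R0].
  - replace i with 0%nat by lia. simpl. lra.
  - destruct (Nat.eq_dec i (S N)) as [->|HiN'];
      [rewrite !sum_eq_R0; try intros k Hk | rewrite IH by lia];
      repeat match goal with |- context [(?u <=? ?v)%nat] => destruct (Nat.leb_spec u v) end;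
      lia || lra.
Qed.

Section Binomial.

Variable n : nat.
Variable p : R.
Hypothesis p_bounds : 0 < p < 1.

Local Notation p_ i := (pmf n p (Z.of_nat i)).
Local Notation q_ i := (tail n p (Z.of_nat i)).

Lemma pmf_of_le i : (i <= n)%nat -> p_ i = Binomial.C n i * p ^ i * (1 - p) ^ (n - i).
Proof.
  intros Hin. unfold pmf.
  destruct (Z.leb_spec 0 (Z.of_nat i)), (Z.leb_spec (Z.of_nat i) (Z.of_nat n)); try lia.
  now rewrite Nat2Z.id.
Qed.

Lemma pmf_of_gt i : (n < i)%nat -> p_ i = 0.
Proof.
  intros Hni. unfold pmf.
  destruct (Z.leb_spec 0 (Z.of_nat i)), (Z.leb_spec (Z.of_nat i) (Z.of_nat n));
    lia || reflexivity.
Qed.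

Lemma pmf_pos i : (i <= n)%nat -> 0 < p_ i.
Proof.
  intros Hin. rewrite pmf_of_le by lia.
  assert (HC : 0 < Binomial.C n i).
  { apply Rdiv_lt_0_compat; [|apply Rmult_lt_0_compat]; apply lt_0_INR, lt_O_fact. }
  apply Rmult_lt_0_compat; [apply Rmult_lt_0_compat|]; [|apply pow_lt..]; lra.
Qed.

Lemma pmf_ge0 i : 0 <= p_ i.
Proof.
  destruct (le_lt_dec i n); [left; apply pmf_pos|rewrite pmf_of_gt]; auto; lra.
Qed.

Lemma pmf_succ i : (i < n)%nat ->
  p_ (S i) * INR (S i) * (1 - p) = p_ i * INR (n - i) * p.
Proof.
  intros Hin. rewrite !pmf_of_le, pascal_step3 by lia.
  replace (n - i)%nat with (S (n - S i)) at 2 by lia.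
  simpl pow. field. apply not_0_INR. lia.
Qed.

Lemma pmf_succ_lt i : (i < n)%nat -> (INR n + 1) * p < INR (S i) -> p_ (S i) < p_ i.
Proof.
  intros Hin Hmode.
  pose proof (pmf_succ i Hin) as Hrec.
  pose proof (pmf_pos i ltac:(lia)).
  rewrite minus_INR, S_INR in * by lia.
  assert (Hk : 0 < (INR n - INR i) * p).
  { apply Rmult_lt_0_compat; [|lra]. pose proof (lt_INR i n Hin). lra. }
  assert (p_ i * ((INR n - INR i) * p) < p_ i * ((INR i + 1) * (1 - p)))
    by (apply Rmult_lt_compat_l; lra).
  apply (Rmult_lt_reg_r ((INR n - INR i) * p)); [exact Hk|]. nra.
Qed.

Lemma pmf_log_concave i k : (i <= k)%nat -> p_ i * p_ (S k) <= p_ (S i) * p_ k.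
Proof.
  intros Hik. destruct (le_lt_dec n k) as [Hnk|Hkn].
  - rewrite (pmf_of_gt (S k)), Rmult_0_r by lia.
    apply Rmult_le_pos; apply pmf_ge0.
  - pose proof (pmf_succ k Hkn) as Hk. pose proof (pmf_succ i ltac:(lia)) as Hi.
    assert (Hcoef : INR (S i) * INR (n - k) <= INR (n - i) * INR (S k)).
    { rewrite <- !mult_INR. apply le_INR. nia. }
    assert (Hid : p_ i * p_ (S k) * (INR (n - i) * INR (S k))
                  = p_ (S i) * p_ k * (INR (S i) * INR (n - k))).
    { apply (Rmult_eq_reg_r (p * (1 - p))); [|nra].
      transitivity ((p_ i * INR (n - i) * p) * (p_ (S k) * INR (S k) * (1 - p))); [ring|].
      rewrite <- Hi, Hk. ring. }
    assert (HX : 0 < INR (n - i) * INR (S k))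
      by (apply Rmult_lt_0_compat; apply lt_0_INR; lia).
    apply (Rmult_le_reg_r _ _ _ HX). rewrite Hid.
    apply Rmult_le_compat_l; [apply Rmult_le_pos; apply pmf_ge0|exact Hcoef].
Qed.

Lemma tail_of_nat i : q_ i = sum_f_R0 (fun k => if (i <=? k)%nat then p_ k else 0) n.
Proof.
  apply sum_eq. intros k _.
  destruct (Z.leb_spec (Z.of_nat i) (Z.of_nat k)), (Nat.leb_spec i k); lia || reflexivity.
Qed.

Lemma tail_succ i : (i <= n)%nat -> q_ i = p_ i + q_ (S i).
Proof. intros Hin. rewrite !tail_of_nat. now apply sum_from_succ. Qed.

Lemma tail_of_gt i : (n < i)%nat -> q_ i = 0.
Proof.
  intros Hni. rewrite tail_of_nat. apply sum_eq_R0. intros k Hk.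
  destruct (Nat.leb_spec i k); lia || reflexivity.
Qed.

Lemma tail_last : q_ n = p_ n.
Proof. rewrite tail_succ, tail_of_gt by lia. ring. Qed.

Lemma tail_pos i : (i <= n)%nat -> 0 < q_ i.
Proof.
  intros Hin. remember (n - i)%nat as d eqn:Hd.
  revert i Hin Hd. induction d as [|d IH]; intros i Hin Hd.
  - replace i with n by lia. rewrite tail_last. now apply pmf_pos.
  - rewrite tail_succ by lia.
    pose proof (pmf_pos i Hin). assert (0 < q_ (S i)) by (apply IH; lia). lra.
Qed.

Lemma tail_lt_geometric m a b : 0 < b -> (m <= n)%nat ->
  (forall k, (m <= k)%nat -> a * p_ (S k) <= b * p_ k) ->
  (a - b) * q_ m < a * p_ m.
Proof.
  intros Hb Hmn Hratio. remember (n - m)%nat as d eqn:Hd.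
  revert m Hmn Hratio Hd. induction d as [|d IH]; intros m Hmn Hratio Hd.
  - replace m with n by lia. rewrite tail_last.
    pose proof (pmf_pos n (le_n n)). nra.
  - rewrite tail_succ by lia.
    assert ((a - b) * q_ (S m) < a * p_ (S m))
      by (apply IH; [lia| intros k Hk; apply Hratio; lia | lia]).
    pose proof (Hratio m (le_n m)). nra.
Qed.

Lemma tail_lt_geometric_succ i : (i < n)%nat ->
  (p_ i - p_ (S i)) * q_ (S i) < p_ i * p_ (S i).
Proof.
  intros Hin. apply tail_lt_geometric; [apply pmf_pos; lia|lia|].
  intros k Hk. apply pmf_log_concave. lia.
Qed.

Lemma yj_of_le i : (S i <= n)%nat ->
  yj n p (Z.of_nat (S i)) = INR (S i) - 1/2 + lower_offset (q_ (S i)) (p_ i) (p_ (S i)).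
Proof.
  intros Hin. unfold yj, corr, lower_offset.
  destruct (Z.leb_spec (Z.of_nat (S i)) (Z.of_nat n)); [|lia].
  replace (Z.of_nat (S i) - 1)%Z with (Z.of_nat i) by lia.
  rewrite <- INR_IZR_INZ. ring.
Qed.

Lemma xj_of_le i : (S i <= n)%nat ->
  xj n p (Z.of_nat (S i)) = INR (S i) - 1/2 + upper_offset (q_ (S i)) (p_ i) (p_ (S i)).
Proof.
  intros Hin. unfold xj, corr, upper_offset.
  destruct (Z.leb_spec (Z.of_nat (S i)) (Z.of_nat n)); [|lia].
  replace (Z.of_nat (S i) - 1)%Z with (Z.of_nat i) by lia.
  rewrite <- INR_IZR_INZ. ring.
Qed.

Lemma yj_of_gt j : (Z.of_nat n < j)%Z -> yj n p j = IZR j - 1/2.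
Proof. intros Hnj. unfold yj. destruct (Z.leb_spec j (Z.of_nat n)); [lia|reflexivity]. Qed.

Lemma xj_of_gt j : (Z.of_nat n < j)%Z -> xj n p j = IZR j + 1/2.
Proof. intros Hnj. unfold xj. destruct (Z.leb_spec j (Z.of_nat n)); [lia|reflexivity]. Qed.

Section BeyondMode.

Variable i : nat.
Hypothesis i_le_n : (S i <= n)%nat.
Hypothesis beyond_mode : (INR n + 1) * p < INR (S i).

Lemma pmf_beyond_mode : 0 < p_ (S i) < p_ i.
Proof. split; [apply pmf_pos|apply pmf_succ_lt]; assumption || lia. Qed.

Lemma yj_bounds : INR (S i) - 1 < yj n p (Z.of_nat (S i)) < INR (S i) - 1/2.
Proof.
  rewrite yj_of_le by assumption.
  pose proof (lower_offset_bounds _ _ (proj1 pmf_beyond_mode) (proj2 pmf_beyond_mode)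
    (q_ (S i)) (tail_pos _ i_le_n) (tail_lt_geometric_succ i i_le_n)).
  lra.
Qed.

Lemma xj_gt : INR (S i) - 1/2 < xj n p (Z.of_nat (S i)).
Proof.
  rewrite xj_of_le by assumption.
  pose proof (upper_offset_pos _ _ (proj1 pmf_beyond_mode) (proj2 pmf_beyond_mode)
    (q_ (S i)) (tail_pos _ i_le_n)).
  lra.
Qed.

End BeyondMode.

Lemma xj_lt_yj_succ i : (S i <= n)%nat -> (INR n + 1) * p < INR (S i) ->
  xj n p (Z.of_nat (S i)) < yj n p (Z.of_nat (S (S i))) <= INR (S i) + 1/2.
Proof.
  intros Hin Hmode. pose proof (pmf_beyond_mode i Hin Hmode) as [Hb Hab].
  rewrite xj_of_le by assumption.
  destruct (Nat.eq_dec (S i) n) as [Hn|Hn].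
  - rewrite yj_of_gt, <- INR_IZR_INZ, (S_INR (S i)) by lia.
    replace (q_ (S i)) with (p_ (S i)) by (rewrite Hn; symmetry; apply tail_last).
    pose proof (upper_offset_lt _ _ Hb Hab (p_ (S i)) Hb).
    replace (p_ (S i) / p_ (S i)) with 1 in * by (field; lra).
    lra.
  - assert (Hmode' : (INR n + 1) * p < INR (S (S i))) by (rewrite (S_INR (S i)); lra).
    pose proof (yj_bounds (S i) ltac:(lia) Hmode').
    pose proof (yj_of_le (S i) ltac:(lia)) as Hy. rewrite (S_INR (S i)) in *.
    rewrite (tail_succ (S i)) by lia.
    pose proof (upper_offset_lt_succ (p_ i) (p_ (S i)) (p_ (S (S i))) (q_ (S (S i)))
      (pmf_pos (S (S i)) ltac:(lia)) (conj Hb Hab) (pmf_log_concave i (S i) ltac:(lia))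
      (Rlt_le _ _ (tail_pos (S (S i)) ltac:(lia))) (tail_lt_geometric_succ (S i) ltac:(lia))).
    lra.
Qed.

End Binomial.

Lemma jstar_le_spec n p j : 0 < p -> (jstar n p <= j)%Z ->
  exists i, j = Z.of_nat (S i) /\ (INR n + 1) * p < INR (S i).
Proof.
  intros Hp Hj. unfold jstar in Hj.
  set (x := (INR n + 1) * p) in *.
  assert (Hx : 0 < x) by (unfold x; pose proof (pos_INR n); nra).
  destruct (base_Int_part x) as [_ Hfloor].
  assert (Hint : (-1 < Int_part x)%Z) by (apply lt_IZR; lra).
  assert (Hxj : x < IZR j) by (apply IZR_le in Hj; rewrite plus_IZR in Hj; lra).
  exists (Z.to_nat j - 1)%nat. split; [lia|].
  replace (S (Z.to_nat j - 1)) with (Z.to_nat j) by lia.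
  rewrite INR_IZR_INZ, Z2Nat.id by lia. exact Hxj.
Qed.

Theorem proposition2p9 (n : nat) (p : R) (j : Z) :
  (1 <= n)%nat -> 0 < p < 1 -> (jstar n p <= j)%Z ->
  IZR j - 3/2 < IZR j - 1 /\ IZR j - 1 < yj n p j /\ yj n p j <= IZR j - 1/2 /\
  IZR j - 1/2 < xj n p j /\ xj n p j <= yj n p (j + 1) /\
  yj n p (j + 1) <= IZR j + 1/2 /\
  ((j <= Z.of_nat n)%Z -> yj n p j < IZR j - 1/2 /\ xj n p j < yj n p (j + 1)).
Proof.
  intros _ Hp Hj.
  destruct (Z_lt_le_dec (Z.of_nat n) j) as [Hnj|Hjn].
  - rewrite (yj_of_gt n p j), (xj_of_gt n p j), (yj_of_gt n p (j + 1)), plus_IZR by lia.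
    repeat split; lra || lia.
  - destruct (jstar_le_spec n p j (proj1 Hp) Hj) as [i [-> Hmode]].
    assert (Hin : (S i <= n)%nat) by lia.
    replace (Z.of_nat (S i) + 1)%Z with (Z.of_nat (S (S i))) by lia.
    rewrite <- INR_IZR_INZ.
    pose proof (yj_bounds n p Hp i Hin Hmode).
    pose proof (xj_gt n p Hp i Hin Hmode).
    pose proof (xj_lt_yj_succ n p Hp i Hin Hmode).
    repeat (split || intros _); lra.
Qed.
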